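(* Let $\mathcal{A}=\{1,\dots,K\}$ with $K\ge2$, $a^*\in\mathcal{A}$, $\sigma>0$, $\delta>0$, and for each $a\in\mathcal{A}$ let $m_a\ge1$ and $\vec{y}_a\in\mathbb{R}^{m_a}$. For $\{\vec{\epsilon}_a\}_{a\in\mathcal{A}}$ with $\vec{\epsilon}_a\in\mathbb{R}^{m_a}$ let $\tilde{\mu}_a=(\vec{y}_a+\vec{\epsilon}_a)^T\mathbf{1}/m_a$. Then the set of all $\{\vec{\epsilon}_a\}_{a\in\mathcal{A}}$ satisfying $$\sum_{a\neq a^*}\Phi\!\left(\frac{\tilde{\mu}_a-\tilde{\mu}_{a^*}}{\sigma^3\sqrt{1/m_a+1/m_{a^*}}}\right)\le\delta\quad\text{and}\quad \tilde{\mu}_a-\tilde{\mu}_{a^*}\le0\ \ \forall a\neq a^*$$ is convex.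
   Context: $\Phi$ denotes the standard normal cumulative distribution function and $\mathbf{1}$ the all-ones vector. Here $\vec{y}_a$ are the rewards collected from arm $a$ in an offline batch and $\vec{\epsilon}_a$ is the attacker's additive poisoning of them, so $\tilde{\mu}_a$ is the post-attack empirical mean. *)

From HB Require Import structures.
From mathcomp Require Import all_boot all_order all_algebra.
From mathcomp Require Import all_classical all_reals all_analysis.
Set Implicit Arguments. Unset Strict Implicit. Unset Printing Implicit Defensive.
Import Order.TTheory GRing.Theory Num.Theory.
Local Open Scope classical_set_scope.
Local Open Scope ring_scope.

Definition Phi {R : realType} (x : R) : R :=
  fine (normal_prob 0 1 `]-oo, x]).

Definition profile (R : realType) (K : nat) (m : 'I_K -> nat) :=
  forall a : 'I_K, 'rV[R]_(m a).

Definition mu_tilde (R : realType) (K : nat) (m : 'I_K -> nat)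
  (y eps : profile R m) (a : 'I_K) : R :=
  (\sum_(i < m a) (y a 0 i + eps a 0 i)) / (m a)%:R.

Definition comb (R : realType) (K : nat) (m : 'I_K -> nat)
  (t : R) (e1 e2 : profile R m) : profile R m :=
  fun a => t *: e1 a + (1 - t) *: e2 a.

Definition convex_profile_set (R : realType) (K : nat) (m : 'I_K -> nat)
  (S : profile R m -> Prop) : Prop :=
  forall (e1 e2 : profile R m) (t : R), S e1 -> S e2 -> 0 <= t -> t <= 1 ->
    S (comb t e1 e2).

Definition attack_set (R : realType) (K : nat) (m : 'I_K -> nat)
  (astar : 'I_K) (sigma delta : R) (y : profile R m) (eps : profile R m) : Prop :=
  (\sum_(a < K | a != astar)
      Phi ((mu_tilde y eps a - mu_tilde y eps astar) /
           (sigma ^+ 3 * Num.sqrt ((m a)%:R^-1 + (m astar)%:R^-1))) <= delta)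
  /\ (forall a : 'I_K, a != astar -> mu_tilde y eps a - mu_tilde y eps astar <= 0).

(* On ]-oo, 0] the standard normal density is nondecreasing, so there the
   cdf Phi lies above its tangent lines (the slope at z being the density at z)
   and is therefore convex.  The post-attack means are affine in the poisoning,
   hence so are the arguments of Phi; on the feasible set these arguments are
   nonpositive, so for a convex combination of two feasible attacks the gaps
   stay nonpositive and each term of the sum is at most the same convex
   combination of the two original terms, whose sums are both at most delta. *)

From HB Require Import structures.
From mathcomp Require Import all_boot all_order all_algebra.
From mathcomp Require Import all_classical all_reals all_analysis.
From mathcomp Require Import ring lra measurable_realfun.
Import Order.TTheory GRing.Theory Num.Theory.
Local Open Scope ring_scope.

Lemma le_conv_subgradient (R : realFieldType) (D : R -> Prop) (F g : R -> R) :
  (forall z w, D z -> D w -> F z + (w - z) * g z <= F w) ->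
  forall x y t, D x -> D y -> D (t * x + (1 - t) * y) -> 0 <= t -> t <= 1 ->
  F (t * x + (1 - t) * y) <= t * F x + (1 - t) * F y.
Proof.
move=> Fg x y t Dx Dy Dz t0 t1; set z := t * x + (1 - t) * y.
have t1' : 0 <= 1 - t by rewrite subr_ge0.
have hx := ler_wpM2l t0 (Fg z x Dz Dx).
have hy := ler_wpM2l t1' (Fg z y Dz Dy).
apply: le_trans (lerD hx hy).
have -> // : t * (F z + (x - z) * g z) + (1 - t) * (F z + (y - z) * g z) = F z.
by rewrite /z; ring.
Qed.

Section integral_itv_oc_bounds.
Variable R : realType.
Local Open Scope classical_set_scope.
Local Open Scope ereal_scope.
Local Notation mu := (@lebesgue_measure R).

Lemma integral_itv_oc_cst (a b r : R) : (a <= b)%R ->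
  \int[mu]_(x in `]a, b]) r%:E = ((b - a) * r)%:E.
Proof.
move=> ab; rewrite (integral_cst _ _ r%:E) //=.
rewrite lebesgue_measure_itv /= lte_fin.
have [ab'|] := ltP a b; first by rewrite -EFinD -EFinM mulrC.
move=> ba; have -> : b = a by apply/eqP; rewrite eq_le ab ba.
by rewrite subrr mul0r mule0.
Qed.

Lemma ge0_integral_itv_oc_le (f : R -> R) (a b M : R) : (a <= b)%R ->
  measurable_fun setT f -> (forall x, (a < x <= b)%R -> (0 <= f x <= M)%R) ->
  \int[mu]_(x in `]a, b]) (f x)%:E <= ((b - a) * M)%:E.
Proof.
move=> ab mf fM; rewrite -integral_itv_oc_cst //.
apply: ge0_le_integral => //.
- by move=> x /fM /andP[].
- by apply/measurable_EFinP; exact: measurable_funTS.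
- by move=> x /fM /andP[].
Qed.

Lemma ge0_integral_itv_oc_ge (f : R -> R) (a b M : R) : (a <= b)%R -> (0 <= M)%R ->
  measurable_fun setT f -> (forall x, (a < x <= b)%R -> (M <= f x)%R) ->
  ((b - a) * M)%:E <= \int[mu]_(x in `]a, b]) (f x)%:E.
Proof.
move=> ab M0 mf Mf; rewrite -integral_itv_oc_cst //.
apply: ge0_le_integral => //.
by apply/measurable_EFinP; exact: measurable_funTS.
Qed.

End integral_itv_oc_bounds.

Section normal_cdf.
Variable R : realType.
Local Open Scope classical_set_scope.
Local Notation f := (@normal_pdf R 0 1).
Local Notation P := (@normal_prob R 0 1).

Lemma normal_pdf01_homo_le0 (x z : R) : x <= z -> z <= 0 -> f x <= f z.
Proof.
move=> xz z0; rewrite /normal_pdf oner_eq0 ler_wpM2l ?normal_peak_ge0 //.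
rewrite /normal_fun ler_expR !subr0 ler_pM2r ?invr_gt0 ?expr1n //; nra.
Qed.

Lemma normal_prob01_fin_num (A : set R) : measurable A -> P A \is a fin_num.
Proof.
move=> mA; rewrite ge0_fin_numE ?measure_ge0 //.
apply: (le_lt_trans (probability_le1 _ _)) => //; exact: ltry.
Qed.

Lemma Phi_increment (a b : R) : a <= b -> Phi b - Phi a = fine (P `]a, b]).
Proof.
move=> ab; rewrite /Phi (@itv_bndbnd_setU _ _ _ (BRight a)) ?bnd_simp //.
rewrite measureU //=; last first.
  by apply/seteqP; split => x //= []; rewrite !in_itv /= => xa /andP[ax _]; lra.
by rewrite fineD ?normal_prob01_fin_num // addrC addKr.
Qed.

Lemma Phi_increment_le (a b : R) : a <= b -> b <= 0 ->
  Phi b - Phi a <= (b - a) * f b.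
Proof.
move=> ab b0; rewrite Phi_increment // -lee_fin fineK ?normal_prob01_fin_num //.
apply: ge0_integral_itv_oc_le => //; first exact: measurable_normal_pdf.
move=> x /andP[_ xb].
by rewrite normal_pdf_ge0 normal_pdf01_homo_le0.
Qed.

Lemma Phi_increment_ge (a b : R) : a <= b -> b <= 0 ->
  (b - a) * f a <= Phi b - Phi a.
Proof.
move=> ab b0; rewrite Phi_increment // -lee_fin fineK ?normal_prob01_fin_num //.
apply: ge0_integral_itv_oc_ge => //.
- exact: normal_pdf_ge0.
- exact: measurable_normal_pdf.
- by move=> x /andP[ax xb]; exact: normal_pdf01_homo_le0 (ltW ax) (le_trans xb b0).
Qed.

Lemma Phi_tangent_le (z w : R) : z <= 0 -> w <= 0 -> Phi z + (w - z) * f z <= Phi w.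
Proof.
move=> z0 w0; have [wz|zw] := lerP w z.
- by have := @Phi_increment_le w z wz z0; nra.
- by have := @Phi_increment_ge z w (ltW zw) w0; lra.
Qed.

Lemma Phi_convex_le0 (x y t : R) : x <= 0 -> y <= 0 -> 0 <= t -> t <= 1 ->
  Phi (t * x + (1 - t) * y) <= t * Phi x + (1 - t) * Phi y.
Proof.
move=> x0 y0 t0 t1; apply: (@le_conv_subgradient _ (fun u => u <= 0) _ f) => //.
  exact: Phi_tangent_le.
nra.
Qed.

End normal_cdf.

Lemma mu_tilde_comb (R : realType) (K : nat) (m : 'I_K -> nat)
  (y e1 e2 : profile R m) (t : R) (a : 'I_K) :
  mu_tilde y (comb t e1 e2) a = t * mu_tilde y e1 a + (1 - t) * mu_tilde y e2 a.
Proof.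
rewrite /mu_tilde /comb !mulrA -!mulrDl; congr (_ / _).
by rewrite !mulr_sumr -big_split /=; apply: eq_bigr => i _; rewrite !mxE; ring.
Qed.

Theorem proposition2 (R : realType) (K : nat) (hK : (2 <= K)%N) (astar : 'I_K)
  (sigma delta : R) (hsigma : 0 < sigma) (hdelta : 0 < delta)
  (m : 'I_K -> nat) (hm : forall a, (1 <= m a)%N) (y : profile R m) :
  convex_profile_set (attack_set astar sigma delta y).
Proof.
move=> e1 e2 t [Phi1 gap1] [Phi2 gap2] t0 t1.
have gap_comb a : mu_tilde y (comb t e1 e2) a - mu_tilde y (comb t e1 e2) astar =
    t * (mu_tilde y e1 a - mu_tilde y e1 astar) +
    (1 - t) * (mu_tilde y e2 a - mu_tilde y e2 astar).
  by rewrite !mu_tilde_comb; ring.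
split; last by move=> a aa; rewrite gap_comb; have := gap1 a aa; have := gap2 a aa; nra.
set c := fun a : 'I_K => sigma ^+ 3 * Num.sqrt ((m a)%:R^-1 + (m astar)%:R^-1).
have invc_ge0 a : 0 <= (c a)^-1 by rewrite invr_ge0 mulr_ge0 ?sqrtr_ge0 ?exprn_ge0 ?ltW.
apply: le_trans (_ : \sum_(a < K | a != astar)
    (t * Phi ((mu_tilde y e1 a - mu_tilde y e1 astar) / c a) +
     (1 - t) * Phi ((mu_tilde y e2 a - mu_tilde y e2 astar) / c a)) <= _).
  apply: ler_sum => a aa; rewrite gap_comb mulrDl -(mulrA t) -(mulrA (1 - t)).
  apply: Phi_convex_le0 => //; apply: mulr_le0_ge0;
    by [exact: gap1 | exact: gap2 | exact: invc_ge0].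
by rewrite big_split /= -!mulr_sumr /c; nra.
Qed.
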